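(* Fix $\alpha>0$ and real constants $C_1,C_2$ with $2C_1+C_2>0$. The functions $b_-$ and $b_+$ are $C^1$ and strictly increasing on $(0,C_{3,crit})$. $b_-$ increases from $b_-(0^+)=-\frac12C_1^2-C_1C_2$ to $b_-(C_{3,crit}^-)=\frac16(C_1-C_2)^2$. $b_+$ increases from $b_+(0^+)=\frac18(C_2^2-4C_1C_2)$ to $b_+(C_{3,crit}^-)=\frac16(C_1-C_2)^2$. Denote by $C_3^-(b)$ and $C_3^+(b)$ the ($C^1$) inverses of $b_-$ and $b_+$. For every $(C_3,b)$ in the open, simply connected region $$\{(C_3,b):\ 0<C_3<C_{3,crit},\ b_-(C_3)<b<b_+(C_3)\}$$ there exists a smooth periodic solution $\phi\in H^\infty_{per}$ of (E1)–(E2). This region is the region of the $(C_3,b)$-plane enclosed by the three boundaries: (1) $C_3=0$, $b\in\big(-\frac{C_1^2}{2}-C_1C_2,\ \frac18(C_2^2-4C_1C_2)\big)$; (2) $C_3=C_3^+(b)$, $b\in\big(\frac18(C_2^2-4C_1C_2),\ \frac16(C_1-C_2)^2\big)$; (3) $C_3=C_3^-(b)$, $b\in\big(-\frac12C_1^2-C_1C_2,\ \frac16(C_1-C_2)^2\big)$.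
   Context: Let $\alpha>0$ and $\omega,\gamma,c\in\mathbb R$. Consider the Dullin–Gottwald–Holm (DGH) equation $m_t+2\omega u_x+um_x+2mu_x+\gamma u_{xxx}=0$ with $m=u-\alpha^2u_{xx}$. Travelling waves have the form $u(x,t)=\phi(\xi)$ with $\xi=x-ct$. Set $C_1=c+\gamma/\alpha^2$ and $C_2=2\omega+\gamma/\alpha^2$. Travelling wave profiles satisfy, for real constants $b$ and $C_3$, (E1) $\alpha^2(\phi-C_1)\phi''+\frac12\alpha^2(\phi')^2+(C_1-C_2-\frac32\phi)\phi=b$, together with the first integral (E2) $\alpha^2(\phi-C_1)(\phi')^2+(C_1-C_2)\phi^2-\phi^3-2b\phi+C_1(2b+C_1C_2)=C_3$. Let $C_{3,crit}=\frac1{27}(2C_1+C_2)^3$. For $C_3\in(0,C_{3,crit})$, the equation $2(\phi-C_1)^2(\phi+\frac{C_2}{2})=C_3$ has three real roots $\phi_1<\phi_2<\phi_3$, ordered as $-\frac{C_2}{2}<\phi_1<\frac{C_1-C_2}{3}<\phi_2<C_1<\phi_3$. Define $U(\phi)=-\frac12\phi^2-\frac12C_2\phi-\frac12C_1C_2-\frac{C_3}{2(\phi-C_1)}$. With $z=\xi/\alpha$, (E2) becomes $b=\frac12(d\phi/dz)^2+U(\phi)$. Set $b_-(C_3)=U(\phi_2)$ and $b_+(C_3)=U(\phi_1)$. *)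

From Stdlib Require Import Reals ClassicalEpsilon.
From Coquelicot Require Import Coquelicot.
Open Scope R_scope.

Definition C3crit (C1 C2 : R) : R := (2 * C1 + C2) ^ 3 / 27.

Definition cubicF (C1 C2 p : R) : R := 2 * (p - C1) ^ 2 * (p + C2 / 2).

Definition phi1 (C1 C2 C3 : R) : R :=
  epsilon (inhabits 0)
    (fun p => - C2 / 2 < p < (C1 - C2) / 3 /\ cubicF C1 C2 p = C3).

Definition phi2 (C1 C2 C3 : R) : R :=
  epsilon (inhabits 0)
    (fun p => (C1 - C2) / 3 < p < C1 /\ cubicF C1 C2 p = C3).

Definition U (C1 C2 C3 p : R) : R :=
  - / 2 * p ^ 2 - / 2 * C2 * p - / 2 * C1 * C2 - C3 / (2 * (p - C1)).

Definition bminus (C1 C2 C3 : R) : R := U C1 C2 C3 (phi2 C1 C2 C3).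
Definition bplus  (C1 C2 C3 : R) : R := U C1 C2 C3 (phi1 C1 C2 C3).

Definition C1_on (f : R -> R) (a b : R) : Prop :=
  forall x, a < x < b -> ex_derive f x /\ continuous (Derive f) x.

Definition strictly_increasing_on (f : R -> R) (a b : R) : Prop :=
  forall x y, a < x -> x < y -> y < b -> f x < f y.

Definition smooth (f : R -> R) : Prop :=
  forall n x, ex_derive_n f n x.

Definition E1 (alpha C1 C2 b : R) (phi : R -> R) : Prop :=
  forall x,
    alpha ^ 2 * (phi x - C1) * Derive_n phi 2 x
    + / 2 * alpha ^ 2 * (Derive phi x) ^ 2
    + (C1 - C2 - 3 / 2 * phi x) * phi x = b.

Definition E2 (alpha C1 C2 C3 b : R) (phi : R -> R) : Prop :=
  forall x,
    alpha ^ 2 * (phi x - C1) * (Derive phi x) ^ 2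
    + (C1 - C2) * phi x ^ 2 - phi x ^ 3 - 2 * b * phi x
    + C1 * (2 * b + C1 * C2) = C3.

Definition smooth_periodic_solution (alpha C1 C2 C3 b : R) (phi : R -> R) : Prop :=
  smooth phi /\
  (exists T, 0 < T /\ forall x, phi (x + T) = phi x) /\
  (exists x y, phi x <> phi y) /\
  E1 alpha C1 C2 b phi /\ E2 alpha C1 C2 C3 b phi.

Definition C1_inverse (f g : R -> R) (a b c d : R) : Prop :=
  (forall y, c < y < d -> a < g y < b /\ f (g y) = y) /\
  (forall x, a < x < b -> g (f x) = x) /\
  C1_on g c d.

From Pilot Require Import Defs.
From Stdlib Require Import Reals Ranalysis5 Lra Lia Psatz.
From Stdlib Require Import ClassicalEpsilon FunctionalExtensionality PropExtensionality.
From Coquelicot Require Import Coquelicot.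
Open Scope R_scope.

(* The critical points of the potential U(phi) = -phi^2/2 - C2 phi/2 - C1 C2/2
   - C3 / (2 (phi - C1)) are the solutions of 2 (phi - C1)^2 (phi + C2/2) = C3,
   and at such a point U equals Vcrit(phi) = phi (C1 - C2 - 3 phi / 2).  Hence
   b_+ = Vcrit o phi1 and b_- = Vcrit o phi2, where phi1, phi2 invert the two
   monotone branches of the cubic on [-C2/2, p0] and [p0, C1], p0 = (C1-C2)/3. *)

Lemma locally_open_interval (a b x : R) :
  a < x < b -> locally x (fun y => a < y < b).
Proof.
  intros Hx.
  assert (Hd : 0 < Rmin (x - a) (b - x)) by (apply Rmin_pos; lra).
  exists (mkposreal _ Hd); intros y Hy.
  change (Rabs (y - x) < Rmin (x - a) (b - x)) in Hy.
  apply Rabs_def2 in Hy.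
  pose proof (Rmin_l (x - a) (b - x)); pose proof (Rmin_r (x - a) (b - x)); lra.
Qed.

Lemma C1_on_of_derive (f D : R -> R) (a b : R) :
  (forall x, a < x < b -> is_derive f x (D x)) ->
  (forall x, a < x < b -> continuous D x) -> C1_on f a b.
Proof.
  intros Hf HD x Hx; split; [exists (D x); auto|].
  apply continuous_ext_loc with D; [|auto].
  apply (filter_imp (fun y => a < y < b)); [|apply locally_open_interval; auto].
  intros y Hy; symmetry; apply is_derive_unique; auto.
Qed.

Lemma filterlim_at_right (h : R -> R) (a l : R) :
  (forall eps, 0 < eps -> exists del, 0 < del /\
     forall y, a < y < a + del -> Rabs (h y - l) < eps) ->
  filterlim h (at_right a) (locally l).
Proof.
  intros H; apply filterlim_locally; intros eps.
  destruct (H eps (cond_pos eps)) as [del [Hdel Hy]].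
  exists (mkposreal _ Hdel); intros y Hball Hay.
  change (Rabs (y - a) < del) in Hball; apply Rabs_def2 in Hball.
  apply Hy; lra.
Qed.

Lemma filterlim_at_left (h : R -> R) (a l : R) :
  (forall eps, 0 < eps -> exists del, 0 < del /\
     forall y, a - del < y < a -> Rabs (h y - l) < eps) ->
  filterlim h (at_left a) (locally l).
Proof.
  intros H; apply filterlim_locally; intros eps.
  destruct (H eps (cond_pos eps)) as [del [Hdel Hy]].
  exists (mkposreal _ Hdel); intros y Hball Hay.
  change (Rabs (y - a) < del) in Hball; apply Rabs_def2 in Hball.
  apply Hy; lra.
Qed.

Lemma root_between (f : R -> R) (a b : R) :
  continuity f -> a < b -> f a * f b < 0 -> exists c, a < c < b /\ f c = 0.
Proof.
  intros Hf Hab Hsign.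
  destruct (IVT_gen f a b 0 Hf) as [c [Hc Hfc]].
  { destruct (Rlt_or_le (f a) 0) as [Ha|Ha].
    - assert (0 < f b) by nra.
      rewrite Rmin_left, Rmax_right; lra.
    - assert (f b < 0) by nra.
      rewrite Rmin_right, Rmax_left; lra. }
  rewrite Rmin_left, Rmax_right in Hc by lra.
  exists c; split; [|exact Hfc].
  destruct Hc as [[Hac|Hac] [Hcb|Hcb]]; subst; try lra;
    rewrite Hfc in Hsign; lra.
Qed.

Definition increasing_on (f : R -> R) (lo hi : R) : Prop :=
  forall x y, lo <= x -> x < y -> y <= hi -> f x < f y.

Lemma increasing_of_derive_pos (f df : R -> R) (lo hi : R) :
  (forall x, is_derive f x (df x)) -> (forall x, lo < x < hi -> 0 < df x) ->
  increasing_on f lo hi.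
Proof.
  intros Hf Hpos x y Hx Hxy Hy.
  destruct (MVT_cor2 f df x y Hxy) as [c [Hc Hcxy]].
  { intros c _; apply is_derive_Reals, Hf. }
  assert (0 < df c * (y - x)) by (apply Rmult_lt_0_compat; [apply Hpos|]; lra).
  lra.
Qed.

Lemma strictly_increasing_lt_iff (h : R -> R) (a b x y : R) :
  strictly_increasing_on h a b -> a < x < b -> a < y < b -> (x < y <-> h x < h y).
Proof.
  intros Hh Hx Hy; split; [intros; apply Hh; lra|].
  intros Hlt; destruct (Rtotal_order x y) as [E|[E|E]]; auto.
  - subst; lra.
  - pose proof (Hh y x ltac:(lra) E ltac:(lra)); lra.
Qed.

Lemma inverse_continuous (f g : R -> R) (lo hi y : R) :
  continuity f -> increasing_on f lo hi ->
  (forall z, f lo < z < f hi -> lo < g z < hi /\ f (g z) = z) ->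
  f lo < y < f hi -> continuity_pt g y.
Proof.
  intros Hf Hinc Hg Hy.
  destruct (Hg y Hy) as [Hgy Hfgy].
  set (lb := (lo + g y) / 2); set (ub := (g y + hi) / 2).
  assert (Hlb : f lo < f lb) by (apply Hinc; unfold lb; lra).
  assert (Hub : f ub < f hi) by (apply Hinc; unfold ub; lra).
  assert (Hmono : forall z x, f lo < z < f hi -> lo <= x <= hi -> f x <= z -> x <= g z).
  { intros z x Hz Hx Hxz; destruct (Hg z Hz) as [Hgz Hfgz].
    destruct (Rle_or_lt x (g z)) as [E|E]; auto.
    pose proof (Hinc (g z) x ltac:(lra) E ltac:(lra)); lra. }
  assert (Hmono' : forall z x, f lo < z < f hi -> lo <= x <= hi -> z <= f x -> g z <= x).
  { intros z x Hz Hx Hxz; destruct (Hg z Hz) as [Hgz Hfgz].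
    destruct (Rle_or_lt (g z) x) as [E|E]; auto.
    pose proof (Hinc x (g z) ltac:(lra) E ltac:(lra)); lra. }
  apply (continuity_pt_recip_interv f g lb ub).
  - unfold lb, ub; lra.
  - intros a b Ha Hab Hb; apply Hinc; unfold lb, ub in *; lra.
  - intros z Hz1 Hz2; unfold comp, id; apply Hg; lra.
  - intros z Hz1 Hz2; split; [apply Hmono|apply Hmono']; unfold lb, ub in *; lra.
  - intros; apply Hf.
  - split.
    + rewrite <- Hfgy; apply Hinc; unfold lb; lra.
    + rewrite <- Hfgy; apply Hinc; unfold ub; lra.
Qed.

Lemma Rinv_close (q d eps : R) :
  d <> 0 -> 0 < eps -> Rabs (q - d) < Rmin (Rabs d / 2) (eps * (Rabs d * Rabs d) / 2) ->
  Rabs (/ q - / d) < eps.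
Proof.
  intros Hd0 Heps Hq.
  assert (Hdp : 0 < Rabs d) by (apply Rabs_pos_lt; auto).
  assert (Hq1 : Rabs (q - d) < Rabs d / 2)
    by (eapply Rlt_le_trans; [exact Hq|apply Rmin_l]).
  assert (Hq2 : Rabs (q - d) < eps * (Rabs d * Rabs d) / 2)
    by (eapply Rlt_le_trans; [exact Hq|apply Rmin_r]).
  assert (Hqa : Rabs d / 2 < Rabs q).
  { pose proof (Rabs_triang_inv d (d - q)) as T.
    replace (d - (d - q)) with q in T by ring.
    rewrite <- Rabs_Ropp in Hq1; replace (- (q - d)) with (d - q) in Hq1 by ring; lra. }
  assert (Hq0 : q <> 0) by (intro E; rewrite E, Rabs_R0 in Hqa; lra).
  replace (/ q - / d) with ((d - q) / (q * d)) by (field; auto).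
  unfold Rdiv; rewrite Rabs_mult, Rabs_inv, Rabs_mult.
  assert (P : 0 < Rabs q * Rabs d) by nra.
  assert (0 < eps * Rabs d * (Rabs q - Rabs d / 2))
    by (apply Rmult_lt_0_compat; [apply Rmult_lt_0_compat|]; lra).
  assert (Rabs (d - q) < eps * (Rabs q * Rabs d)) by (rewrite Rabs_minus_sym; nra).
  apply (Rmult_lt_reg_r (Rabs q * Rabs d)); auto.
  rewrite Rmult_assoc, Rinv_l, Rmult_1_r; lra.
Qed.

Lemma inverse_derive (f g : R -> R) (y0 d eta : R) :
  0 < eta -> (forall y, Rabs (y - y0) < eta -> f (g y) = y) ->
  continuity_pt g y0 -> is_derive f (g y0) d -> d <> 0 -> is_derive g y0 (/ d).
Proof.
  intros Heta Hfg Hc Hd Hd0.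
  apply is_derive_Reals in Hd; apply is_derive_Reals.
  intros eps Heps.
  assert (Hdp : 0 < Rabs d) by (apply Rabs_pos_lt; auto).
  set (e' := Rmin (Rabs d / 2) (eps * (Rabs d * Rabs d) / 2)).
  assert (He' : 0 < e').
  { unfold e'; apply Rmin_pos; [lra|]. apply Rmult_lt_0_compat; [|lra].
    apply Rmult_lt_0_compat; [lra|apply Rmult_lt_0_compat; lra]. }
  destruct (Hd e' He') as [d1 Hd1].
  destruct (Hc d1 (cond_pos d1)) as [al [Hal Hal2]].
  assert (Hmin : 0 < Rmin al eta) by (apply Rmin_pos; lra).
  exists (mkposreal _ Hmin); intros h Hh0 Hh; simpl in Hh.
  assert (Hh1 : Rabs h < al) by (eapply Rlt_le_trans; [exact Hh|apply Rmin_l]).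
  assert (Hh2 : Rabs h < eta) by (eapply Rlt_le_trans; [exact Hh|apply Rmin_r]).
  (* k is the increment of g: nonzero, and small by continuity of g *)
  set (k := g (y0 + h) - g y0).
  assert (Hf0 : f (g y0) = y0) by (apply Hfg; rewrite Rminus_diag, Rabs_R0; lra).
  assert (Hf1 : f (g y0 + k) = y0 + h).
  { unfold k; replace (g y0 + (g (y0 + h) - g y0)) with (g (y0 + h)) by ring.
    apply Hfg; replace (y0 + h - y0) with h by ring; exact Hh2. }
  assert (Hk0 : k <> 0) by (intro Hk; rewrite Hk, Rplus_0_r, Hf0 in Hf1; lra).
  assert (Hk1 : Rabs k < d1).
  { apply (Hal2 (y0 + h)); split; [split; [exact I|lra]|].
    simpl; unfold Rdist; replace (y0 + h - y0) with h by ring; exact Hh1. }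
  (* the difference quotient h / k of f at g y0 is e'-close to d *)
  specialize (Hd1 k Hk0 Hk1); rewrite Hf1, Hf0 in Hd1.
  replace (y0 + h - y0) with h in Hd1 by ring.
  replace (k / h) with (/ (h / k)) by (field; auto).
  apply Rinv_close; auto.
Qed.

Definition Cn (n : nat) (f : R -> R) : Prop :=
  forall k x, (k <= n)%nat -> ex_derive_n f k x.

Lemma Derive_n_Derive (f : R -> R) (k : nat) (x : R) :
  Derive_n (Derive f) k x = Derive_n f (S k) x.
Proof.
  pose proof (Derive_n_comp f k 1 x) as E; rewrite Nat.add_1_r in E; exact E.
Qed.

(* Every function is C^0 in this sense (only existence is required). *)
Lemma Cn_0 (f : R -> R) : Cn 0 f.
Proof. intros k x Hk; replace k with 0%nat by lia; exact I. Qed.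

Lemma Cn_S (n : nat) (f : R -> R) :
  (forall x, ex_derive f x) -> Cn n (Derive f) -> Cn (S n) f.
Proof.
  intros Hd Hn [|[|k]] x Hk; [exact I|exact (Hd x)|].
  specialize (Hn (S k) x ltac:(lia)); simpl in Hn |- *.
  eapply ex_derive_ext; [|exact Hn]; intros t; apply Derive_n_Derive.
Qed.

Lemma Cn_S_inv (n : nat) (f : R -> R) :
  Cn (S n) f -> (forall x, ex_derive f x) /\ Cn n (Derive f).
Proof.
  intros H; split; [intros x; exact (H 1%nat x ltac:(lia))|].
  intros [|k] x Hk; [exact I|].
  specialize (H (S (S k)) x ltac:(lia)); simpl in H |- *.
  eapply ex_derive_ext; [|exact H]; intros t; symmetry; apply Derive_n_Derive.
Qed.

Lemma Cn_weaken (n : nat) (f : R -> R) : Cn (S n) f -> Cn n f.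
Proof. intros H k x Hk; apply H; lia. Qed.

Lemma Cn_ext (n : nat) (f g : R -> R) : (forall x, f x = g x) -> Cn n f -> Cn n g.
Proof. intros E H; replace g with f; [exact H|apply functional_extensionality, E]. Qed.

Lemma Cn_const (n : nat) (c : R) : Cn n (fun _ => c).
Proof.
  revert c; induction n as [|n IH]; intros c; [apply Cn_0|].
  apply Cn_S; [intros; apply ex_derive_const|].
  apply (Cn_ext _ (fun _ => 0)); [intros x; rewrite Derive_const; reflexivity|apply IH].
Qed.

Lemma Cn_plus (n : nat) (f g : R -> R) : Cn n f -> Cn n g -> Cn n (fun x => f x + g x).
Proof.
  revert f g; induction n as [|n IH]; intros f g Hf Hg; [apply Cn_0|].
  apply Cn_S_inv in Hf as [Hf1 Hf2]; apply Cn_S_inv in Hg as [Hg1 Hg2].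
  apply Cn_S; [intros x; apply (ex_derive_plus f g); auto|].
  eapply Cn_ext; [|exact (IH _ _ Hf2 Hg2)].
  intros x; rewrite Derive_plus; auto.
Qed.

Lemma Cn_mult (n : nat) (f g : R -> R) : Cn n f -> Cn n g -> Cn n (fun x => f x * g x).
Proof.
  revert f g; induction n as [|n IH]; intros f g Hf Hg; [apply Cn_0|].
  pose proof (Cn_weaken _ _ Hf) as Hf'; pose proof (Cn_weaken _ _ Hg) as Hg'.
  apply Cn_S_inv in Hf as [Hf1 Hf2]; apply Cn_S_inv in Hg as [Hg1 Hg2].
  apply Cn_S; [intros x; apply (ex_derive_mult f g); auto|].
  eapply Cn_ext; [|exact (Cn_plus _ _ _ (IH _ _ Hf2 Hg') (IH _ _ Hf' Hg2))].
  intros x; rewrite Derive_mult; auto.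
Qed.

Lemma Cn_opp (n : nat) (f : R -> R) : Cn n f -> Cn n (fun x => - f x).
Proof.
  intros H; apply (Cn_ext _ (fun x => -1 * f x)); [intros; ring|].
  apply Cn_mult; [apply Cn_const|exact H].
Qed.

Lemma Cn_inv (n : nat) (u : R -> R) :
  Cn n u -> (forall x, u x <> 0) -> Cn n (fun x => / u x).
Proof.
  revert u; induction n as [|n IH]; intros u Hu Hne; [apply Cn_0|].
  pose proof (IH _ (Cn_weaken _ _ Hu) Hne) as Hi.
  apply Cn_S_inv in Hu as [Hu1 Hu2].
  apply Cn_S; [intros x; apply (ex_derive_inv u); auto|].
  eapply Cn_ext; [|exact (Cn_opp _ _ (Cn_mult _ _ _ Hu2 (Cn_mult _ _ _ Hi Hi)))].
  intros x; rewrite Derive_inv by auto; field; auto.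
Qed.

Lemma Cn_sqrt (n : nat) (h : R -> R) :
  Cn n h -> (forall x, 0 < h x) -> Cn n (fun x => sqrt (h x)).
Proof.
  revert h; induction n as [|n IH]; intros h Hh Hpos; [apply Cn_0|].
  pose proof (IH _ (Cn_weaken _ _ Hh) Hpos) as Hs.
  apply Cn_S_inv in Hh as [Hh1 Hh2].
  assert (Hd : forall x, is_derive (fun y => sqrt (h y)) x (Derive h x / (2 * sqrt (h x))))
    by (intros x; apply is_derive_sqrt; [apply Derive_correct|]; auto).
  apply Cn_S; [intros x; eexists; apply Hd|].
  assert (Hs0 : forall x, 2 * sqrt (h x) <> 0)
    by (intros x; pose proof (sqrt_lt_R0 _ (Hpos x)); lra).
  eapply Cn_ext; [|exact (Cn_mult _ _ _ Hh2 (Cn_inv _ _ (Cn_mult _ _ _ (Cn_const _ 2) Hs) Hs0))].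
  intros x; symmetry; apply is_derive_unique, Hd.
Qed.

Lemma Cn_cos (n : nat) : Cn n cos.
Proof.
  enough (Cn n cos /\ Cn n sin) by tauto.
  induction n as [|n [Hc Hs]]; [split; apply Cn_0|].
  split; apply Cn_S.
  - intros x; eexists; apply is_derive_cos.
  - eapply Cn_ext; [|exact (Cn_opp _ _ Hs)].
    intros x; symmetry; apply is_derive_unique, is_derive_cos.
  - intros x; eexists; apply is_derive_sin.
  - eapply Cn_ext; [|exact Hc].
    intros x; symmetry; apply is_derive_unique, is_derive_sin.
Qed.

(* Composition with a solution of the autonomous equation theta' = w(theta):
   if w and F are smooth then F o theta is smooth, since
   (F o theta)' = (F' * w) o theta. *)
Lemma Cn_along_flow (theta w : R -> R) :
  (forall x, is_derive theta x (w (theta x))) -> (forall n, Cn n w) ->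
  forall n F, (forall k, Cn k F) -> Cn n (fun x => F (theta x)).
Proof.
  intros Hth Hw n; induction n as [|n IH]; intros F HF; [apply Cn_0|].
  assert (HF1 : forall x, ex_derive F x) by (intros; apply (Cn_S_inv _ _ (HF 1%nat))).
  assert (HF2 : forall k, Cn k (Derive F)) by (intros k; apply (Cn_S_inv _ _ (HF (S k)))).
  assert (Hd : forall x, is_derive (fun y => F (theta y)) x (Derive F (theta x) * w (theta x))).
  { intros x; rewrite Rmult_comm.
    apply (is_derive_comp F theta x); [apply Derive_correct, HF1|apply Hth]. }
  apply Cn_S; [intros x; eexists; apply Hd|].
  eapply Cn_ext; [|exact (IH (fun t => Derive F t * w t) (fun k => Cn_mult _ _ _ (HF2 k) (Hw k)))].
  intros x; symmetry; apply is_derive_unique, Hd.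
Qed.

Lemma increasing_on_open (f : R -> R) (lo hi : R) :
  increasing_on f lo hi -> strictly_increasing_on f lo hi.
Proof. intros Hf x y Hx Hxy Hy; apply Hf; lra. Qed.

Definition branch_inv (f : R -> R) (lo hi y : R) : R :=
  epsilon (inhabits 0) (fun p => lo < p < hi /\ f p = y).

Section MonotoneBranch.
Variables (f : R -> R) (lo hi : R).
Hypothesis lo_lt_hi : lo < hi.
Hypothesis f_cont : continuity f.
Hypothesis f_incr : increasing_on f lo hi.

Let g := branch_inv f lo hi.

Lemma branch_spec (y : R) : f lo < y < f hi -> lo < g y < hi /\ f (g y) = y.
Proof.
  intros Hy; unfold g, branch_inv; apply epsilon_spec.
  destruct (root_between (fun p => f p - y) lo hi) as [p [Hp Hfp]];
    [|exact lo_lt_hi|nra|exists p; split; [exact Hp|lra]].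
  apply continuity_minus; [exact f_cont|apply continuity_const; intros ? ?; reflexivity].
Qed.

Lemma branch_of_value (x : R) : lo < x < hi -> g (f x) = x.
Proof.
  intros Hx.
  destruct (branch_spec (f x)) as [Hgx Hfgx]; [split; apply f_incr; lra|].
  destruct (Rtotal_order (g (f x)) x) as [E|[E|E]]; auto.
  - pose proof (f_incr (g (f x)) x ltac:(lra) E ltac:(lra)); lra.
  - pose proof (f_incr x (g (f x)) ltac:(lra) E ltac:(lra)); lra.
Qed.

Lemma branch_incr : strictly_increasing_on g (f lo) (f hi).
Proof.
  intros x y Hx Hxy Hy.
  destruct (branch_spec x) as [Hgx Hfx]; [lra|].
  destruct (branch_spec y) as [Hgy Hfy]; [lra|].
  apply (strictly_increasing_lt_iff f lo hi); auto using increasing_on_open.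
  rewrite Hfx, Hfy; exact Hxy.
Qed.

Lemma branch_cont (y : R) : f lo < y < f hi -> continuity_pt g y.
Proof. apply (inverse_continuous f g lo hi y f_cont f_incr branch_spec). Qed.

Lemma branch_lim_lo : filterlim g (at_right (f lo)) (locally lo).
Proof.
  apply filterlim_at_right; intros eps Heps.
  set (q := Rmin (lo + eps / 2) ((lo + hi) / 2)).
  assert (Hq : lo < q < hi)
    by (unfold q; split; [apply Rmin_glb_lt|eapply Rle_lt_trans; [apply Rmin_r|]]; lra).
  assert (Hq' : q <= lo + eps / 2) by apply Rmin_l.
  assert (Hfq : f lo < f q < f hi) by (split; apply f_incr; lra).
  exists (f q - f lo); split; [lra|]; intros y Hy.
  destruct (branch_spec y) as [Hgy _]; [lra|].
  assert (g y < g (f q)) by (apply branch_incr; lra).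
  rewrite branch_of_value in * by lra.
  apply Rabs_def1; lra.
Qed.

Lemma branch_lim_hi : filterlim g (at_left (f hi)) (locally hi).
Proof.
  apply filterlim_at_left; intros eps Heps.
  set (q := Rmax (hi - eps / 2) ((lo + hi) / 2)).
  assert (Hq : lo < q < hi)
    by (unfold q; split; [eapply Rlt_le_trans; [|apply Rmax_r]|apply Rmax_lub_lt]; lra).
  assert (Hq' : hi - eps / 2 <= q) by apply Rmax_l.
  assert (Hfq : f lo < f q < f hi) by (split; apply f_incr; lra).
  exists (f hi - f q); split; [lra|]; intros y Hy.
  destruct (branch_spec y) as [Hgy _]; [lra|].
  assert (g (f q) < g y) by (apply branch_incr; lra).
  rewrite branch_of_value in * by lra.
  apply Rabs_def1; lra.
Qed.

End MonotoneBranch.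

(* The equation theta' = w(theta) with w continuous, positive and bounded by M
   has a global solution: the inverse of the travel time int_0^t 1/w. *)
Section AutonomousFlow.
Variables (w : R -> R) (M : R).
Hypothesis w_cont : forall t, continuous w t.
Hypothesis w_pos : forall t, 0 < w t.
Hypothesis w_bound : forall t, w t <= M.

Definition travel_time (t : R) : R := RInt (fun s => / w s) 0 t.

Definition flow (y : R) : R := epsilon (inhabits 0) (fun t => travel_time t = y).

Lemma travel_time_derive (t : R) : is_derive travel_time t (/ w t).
Proof.
  assert (Hc : forall s, continuous (fun s => / w s) s)
    by (intros s; apply continuous_Rinv_comp; [apply w_cont|apply Rgt_not_eq, w_pos]).
  apply (is_derive_RInt (fun s => / w s) travel_time 0 t); [|apply Hc].
  apply filter_forall; intros b; apply (RInt_correct (V := R_CompleteNormedModule)).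
  apply (ex_RInt_continuous (V := R_CompleteNormedModule)); intros; apply Hc.
Qed.

Lemma travel_time_cont (t : R) : continuity_pt travel_time t.
Proof.
  apply continuity_pt_filterlim, (@ex_derive_continuous R_AbsRing R_NormedModule).
  eexists; apply travel_time_derive.
Qed.

Lemma travel_time_lower (x y : R) :
  x <= y -> (y - x) / M <= travel_time y - travel_time x.
Proof.
  intros Hxy.
  destruct (MVT_gen travel_time x y (fun s => / w s)) as [c [_ E]];
    [intros; apply travel_time_derive|intros; apply travel_time_cont|].
  rewrite E; unfold Rdiv; rewrite Rmult_comm.
  apply Rmult_le_compat_r; [lra|].
  apply Rinv_le_contravar; [apply w_pos|apply w_bound].
Qed.

Lemma travel_time_incr (x y : R) : x < y -> travel_time x < travel_time y.
Proof.
  intros Hxy.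
  assert (HM : 0 < M) by (pose proof (w_pos 0); pose proof (w_bound 0); lra).
  pose proof (travel_time_lower x y ltac:(lra)).
  assert (0 < (y - x) / M) by (apply Rdiv_lt_0_compat; lra); lra.
Qed.

Lemma travel_time_lt_iff (x y : R) : x < y <-> travel_time x < travel_time y.
Proof.
  split; [apply travel_time_incr|].
  intros H; destruct (Rtotal_order x y) as [E|[E|E]]; auto.
  - subst; lra.
  - pose proof (travel_time_incr y x E); lra.
Qed.

Lemma travel_time_0 : travel_time 0 = 0.
Proof. unfold travel_time; rewrite RInt_point; reflexivity. Qed.

Lemma flow_spec (y : R) : travel_time (flow y) = y.
Proof.
  assert (HM : 0 < M) by (pose proof (w_pos 0); pose proof (w_bound 0); lra).
  unfold flow; apply epsilon_spec.
  set (L := M * (Rabs y + 1)).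
  assert (HL : (Rabs y + 1) = L / M) by (unfold L; field; lra).
  assert (0 < L) by (unfold L; pose proof (Rabs_pos y); nra).
  pose proof (travel_time_lower 0 L ltac:(lra)) as Hup.
  pose proof (travel_time_lower (- L) 0 ltac:(lra)) as Hdown.
  rewrite travel_time_0 in Hup, Hdown.
  replace (L - 0) with L in Hup by ring; replace (0 - - L) with L in Hdown by ring.
  pose proof (Rle_abs y); pose proof (Rle_abs (- y)); rewrite Rabs_Ropp in *.
  destruct (root_between (fun t => travel_time t - y) (- L) L) as [t [_ Ht]].
  - apply continuity_minus; [exact travel_time_cont|].
    apply continuity_const; intros ? ?; reflexivity.
  - lra.
  - assert (travel_time (- L) - y < 0) by lra.
    assert (0 < travel_time L - y) by lra; nra.
  - exists t; lra.
Qed.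

Lemma flow_travel (t : R) : flow (travel_time t) = t.
Proof.
  pose proof (flow_spec (travel_time t)) as E.
  destruct (Rtotal_order (flow (travel_time t)) t) as [L|[L|L]]; auto;
    apply travel_time_incr in L; lra.
Qed.

Lemma flow_cont (y : R) : continuity_pt flow y.
Proof.
  apply (inverse_continuous travel_time flow (flow y - 1) (flow y + 1)).
  - exact travel_time_cont.
  - intros a b _ Hab _; apply travel_time_incr, Hab.
  - intros z Hz; rewrite <- (flow_spec z) in Hz.
    rewrite <- !travel_time_lt_iff in Hz; split; [lra|apply flow_spec].
  - rewrite <- (flow_spec y) at 2 3; rewrite <- !travel_time_lt_iff; lra.
Qed.

Lemma flow_derive (y : R) : is_derive flow y (w (flow y)).
Proof.
  rewrite <- (Rinv_inv (w (flow y))).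
  apply (inverse_derive travel_time flow y _ 1); [lra|intros; apply flow_spec|
    apply flow_cont|apply travel_time_derive|].
  apply Rgt_not_eq, Rinv_0_lt_compat, w_pos.
Qed.

Section Periodic.
Variable T : R.
Hypothesis w_periodic : forall t, w (t + T) = w t.

Lemma travel_time_shift (t : R) : travel_time (t + T) = travel_time t + travel_time T.
Proof.
  set (h := fun t => travel_time (t + T) - travel_time t).
  assert (Hd : forall s, is_derive h s 0).
  { intros s; unfold h.
    replace 0 with (1 * / w (s + T) - / w s) by (rewrite w_periodic; ring).
    apply (is_derive_minus (fun t => travel_time (t + T)) travel_time).
    - apply (is_derive_comp travel_time (fun t => t + T)); [apply travel_time_derive|].
      auto_derive; auto.
    - apply travel_time_derive. }
  destruct (MVT_gen h 0 t (fun _ => 0)) as [c [_ E]]; [intros; apply Hd| |].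
  - intros; apply continuity_pt_filterlim, (@ex_derive_continuous R_AbsRing R_NormedModule).
    eexists; apply Hd.
  - unfold h in E; rewrite travel_time_0, Rplus_0_l in E; lra.
Qed.

Lemma flow_shift (y : R) : flow (y + travel_time T) = flow y + T.
Proof.
  rewrite <- (flow_spec y) at 1; rewrite <- travel_time_shift; apply flow_travel.
Qed.

End Periodic.

End AutonomousFlow.

(* The value of U at its critical point p, i.e. U(p) when C3 = cubicF p. *)
Definition Vcrit (C1 C2 p : R) : R := p * (C1 - C2 - 3 / 2 * p).

Lemma U_at_critical (C1 C2 p : R) : p <> C1 -> U C1 C2 (cubicF C1 C2 p) p = Vcrit C1 C2 p.
Proof. intros Hp; unfold U, cubicF, Vcrit; field; lra. Qed.

Lemma Vcrit_derive (C1 C2 p : R) : is_derive (Vcrit C1 C2) p (C1 - C2 - 3 * p).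
Proof. unfold Vcrit; auto_derive; auto; field. Qed.

(* Vcrit is a downward parabola with vertex at (C1 - C2)/3. *)
Lemma Vcrit_incr (C1 C2 x y : R) : x < y -> y <= (C1 - C2) / 3 -> Vcrit C1 C2 x < Vcrit C1 C2 y.
Proof.
  intros Hxy Hy; unfold Vcrit.
  assert (0 < (y - x) * (C1 - C2 - 3 / 2 * (x + y))) by (apply Rmult_lt_0_compat; lra).
  nra.
Qed.

Lemma Vcrit_decr (C1 C2 x y : R) : (C1 - C2) / 3 <= x -> x < y -> Vcrit C1 C2 y < Vcrit C1 C2 x.
Proof.
  intros Hx Hxy; unfold Vcrit.
  assert (0 < (y - x) * (3 / 2 * (x + y) - (C1 - C2))) by (apply Rmult_lt_0_compat; lra).
  nra.
Qed.

(* The cubic 2 (p - C1)^2 (p + C2/2) and its branch inverses phi1, phi2, under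
   the standing assumption 2 C1 + C2 > 0 (so that -C2/2 < p0 < C1). *)
Section Cubic.
Variables C1 C2 : R.
Hypothesis HK : 0 < 2 * C1 + C2.

Local Notation p0 := ((C1 - C2) / 3).
Local Notation crit := (C3crit C1 C2).

Lemma crit_pos : 0 < crit.
Proof. unfold C3crit; apply Rdiv_lt_0_compat; [apply pow_lt|]; lra. Qed.

Lemma cubic_derive (p : R) : is_derive (cubicF C1 C2) p (6 * (p - C1) * (p - p0)).
Proof. unfold cubicF; auto_derive; auto; field. Qed.

Lemma cubic_cont : continuity (cubicF C1 C2).
Proof. unfold cubicF; reg. Qed.

Lemma neg_cubic_cont : continuity (fun p => - cubicF C1 C2 p).
Proof. unfold cubicF; reg. Qed.

Lemma cubic_at_minus_half_C2 : cubicF C1 C2 (- C2 / 2) = 0.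
Proof. unfold cubicF; field. Qed.

Lemma cubic_at_C1 : cubicF C1 C2 C1 = 0.
Proof. unfold cubicF; ring. Qed.

Lemma cubic_at_p0 : cubicF C1 C2 p0 = crit.
Proof. unfold cubicF, C3crit; field. Qed.

Lemma cubic_incr : increasing_on (cubicF C1 C2) (- C2 / 2) p0.
Proof.
  apply (increasing_of_derive_pos _ _ _ _ cubic_derive).
  intros x Hx; assert (0 < (C1 - x) * (p0 - x)) by (apply Rmult_lt_0_compat; lra); nra.
Qed.

Lemma neg_cubic_incr : increasing_on (fun p => - cubicF C1 C2 p) p0 C1.
Proof.
  apply (increasing_of_derive_pos _ (fun p => - (6 * (p - C1) * (p - p0)))).
  - intros x; apply (is_derive_opp (cubicF C1 C2)), cubic_derive.
  - intros x Hx; assert (0 < (C1 - x) * (x - p0)) by (apply Rmult_lt_0_compat; lra); nra.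
Qed.

Lemma cubic_range_left (p : R) : - C2 / 2 < p < p0 -> 0 < cubicF C1 C2 p < crit.
Proof.
  intros Hp; rewrite <- cubic_at_minus_half_C2, <- cubic_at_p0.
  split; apply cubic_incr; lra.
Qed.

Lemma cubic_range_right (p : R) : p0 < p < C1 -> 0 < cubicF C1 C2 p < crit.
Proof.
  intros Hp.
  pose proof (neg_cubic_incr p0 p ltac:(lra) ltac:(lra) ltac:(lra)).
  pose proof (neg_cubic_incr p C1 ltac:(lra) ltac:(lra) ltac:(lra)).
  cbv beta in *; rewrite cubic_at_C1, cubic_at_p0 in *; lra.
Qed.

Lemma phi2_branch (y : R) :
  phi2 C1 C2 y = branch_inv (fun p => - cubicF C1 C2 p) p0 C1 (- y).
Proof.
  unfold phi2, branch_inv; f_equal; apply functional_extensionality; intros p.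
  apply propositional_extensionality; split; intros [Hp E]; split; auto; lra.
Qed.

Lemma phi1_spec (y : R) : 0 < y < crit ->
  - C2 / 2 < phi1 C1 C2 y < p0 /\ cubicF C1 C2 (phi1 C1 C2 y) = y.
Proof.
  intros Hy; apply (branch_spec (cubicF C1 C2) (- C2 / 2) p0 ltac:(lra) cubic_cont).
  rewrite cubic_at_minus_half_C2, cubic_at_p0; exact Hy.
Qed.

Lemma phi2_spec (y : R) : 0 < y < crit ->
  p0 < phi2 C1 C2 y < C1 /\ cubicF C1 C2 (phi2 C1 C2 y) = y.
Proof.
  intros Hy; rewrite phi2_branch.
  destruct (branch_spec _ p0 C1 ltac:(lra) neg_cubic_cont (- y)) as [H E];
    [rewrite cubic_at_C1, cubic_at_p0; lra|].
  split; [exact H|lra].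
Qed.

Lemma phi1_of_value (x : R) : - C2 / 2 < x < p0 -> phi1 C1 C2 (cubicF C1 C2 x) = x.
Proof. apply (branch_of_value (cubicF C1 C2) (- C2 / 2) p0 ltac:(lra) cubic_cont cubic_incr). Qed.

Lemma phi2_of_value (x : R) : p0 < x < C1 -> phi2 C1 C2 (cubicF C1 C2 x) = x.
Proof.
  intros Hx; rewrite phi2_branch.
  apply (branch_of_value _ p0 C1 ltac:(lra) neg_cubic_cont neg_cubic_incr); lra.
Qed.

Lemma phi1_incr : strictly_increasing_on (phi1 C1 C2) 0 crit.
Proof.
  pose proof (branch_incr (cubicF C1 C2) (- C2 / 2) p0 ltac:(lra) cubic_cont cubic_incr) as H.
  rewrite cubic_at_minus_half_C2, cubic_at_p0 in H; exact H.
Qed.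

Lemma phi2_decr (x y : R) : 0 < x -> x < y -> y < crit -> phi2 C1 C2 y < phi2 C1 C2 x.
Proof.
  intros Hx Hxy Hy; rewrite !phi2_branch.
  apply (branch_incr _ p0 C1 ltac:(lra) neg_cubic_cont neg_cubic_incr);
    cbv beta; rewrite ?cubic_at_C1, ?cubic_at_p0; lra.
Qed.

Lemma phi1_cont (y : R) : 0 < y < crit -> continuity_pt (phi1 C1 C2) y.
Proof.
  intros Hy; apply (branch_cont (cubicF C1 C2) (- C2 / 2) p0 ltac:(lra) cubic_cont cubic_incr).
  rewrite cubic_at_minus_half_C2, cubic_at_p0; exact Hy.
Qed.

Lemma phi2_cont (y : R) : 0 < y < crit -> continuity_pt (phi2 C1 C2) y.
Proof.
  intros Hy; apply continuity_pt_filterlim.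
  apply (continuous_ext (fun z => branch_inv (fun p => - cubicF C1 C2 p) p0 C1 (- z)));
    [intros; symmetry; apply phi2_branch|].
  apply (continuous_comp Ropp); [exact (continuous_opp _ _ (continuous_id y))|].
  apply continuity_pt_filterlim.
  apply (branch_cont _ p0 C1 ltac:(lra) neg_cubic_cont neg_cubic_incr).
  rewrite cubic_at_C1, cubic_at_p0; lra.
Qed.

Lemma phi1_lim0 : filterlim (phi1 C1 C2) (at_right 0) (locally (- C2 / 2)).
Proof.
  pose proof (branch_lim_lo (cubicF C1 C2) (- C2 / 2) p0 ltac:(lra) cubic_cont cubic_incr) as H.
  rewrite cubic_at_minus_half_C2 in H; exact H.
Qed.

Lemma phi1_lim_crit : filterlim (phi1 C1 C2) (at_left crit) (locally p0).
Proof.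
  pose proof (branch_lim_hi (cubicF C1 C2) (- C2 / 2) p0 ltac:(lra) cubic_cont cubic_incr) as H.
  rewrite cubic_at_p0 in H; exact H.
Qed.

Lemma phi2_lim0 : filterlim (phi2 C1 C2) (at_right 0) (locally C1).
Proof.
  pose proof (branch_lim_hi _ p0 C1 ltac:(lra) neg_cubic_cont neg_cubic_incr) as H.
  cbv beta in H; rewrite cubic_at_C1 in H.
  apply (filterlim_ext (fun y => branch_inv (fun p => - cubicF C1 C2 p) p0 C1 (- y)));
    [intros; symmetry; apply phi2_branch|].
  eapply filterlim_comp; [apply filterlim_Ropp_right|exact H].
Qed.

Lemma phi2_lim_crit : filterlim (phi2 C1 C2) (at_left crit) (locally p0).
Proof.
  pose proof (branch_lim_lo _ p0 C1 ltac:(lra) neg_cubic_cont neg_cubic_incr) as H.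
  cbv beta in H; rewrite cubic_at_p0 in H.
  apply (filterlim_ext (fun y => branch_inv (fun p => - cubicF C1 C2 p) p0 C1 (- y)));
    [intros; symmetry; apply phi2_branch|].
  eapply filterlim_comp; [apply filterlim_Ropp_left|exact H].
Qed.

Lemma bminus_eq (y : R) : 0 < y < crit -> bminus C1 C2 y = Vcrit C1 C2 (phi2 C1 C2 y).
Proof.
  intros Hy; destruct (phi2_spec y Hy) as [Hp E].
  unfold bminus; rewrite <- E at 1; apply U_at_critical; lra.
Qed.

Lemma bplus_eq (y : R) : 0 < y < crit -> bplus C1 C2 y = Vcrit C1 C2 (phi1 C1 C2 y).
Proof.
  intros Hy; destruct (phi1_spec y Hy) as [Hp E].
  unfold bplus; rewrite <- E at 1; apply U_at_critical; lra.
Qed.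

(* b_- = Vcrit o phi2 with phi2 decreasing to the right of the vertex, and
   b_+ = Vcrit o phi1 with phi1 increasing to its left: both increase. *)
Lemma bminus_incr : strictly_increasing_on (bminus C1 C2) 0 crit.
Proof.
  intros x y Hx Hxy Hy; rewrite !bminus_eq by lra.
  destruct (phi2_spec y ltac:(lra)) as [Hp _].
  apply Vcrit_decr; [lra|apply phi2_decr; lra].
Qed.

Lemma bplus_incr : strictly_increasing_on (bplus C1 C2) 0 crit.
Proof.
  intros x y Hx Hxy Hy; rewrite !bplus_eq by lra.
  destruct (phi1_spec x ltac:(lra)) as [Hpx _]; destruct (phi1_spec y ltac:(lra)) as [Hpy _].
  apply Vcrit_incr; [apply phi1_incr|]; lra.
Qed.

(* Envelope formula: along a branch phi of critical points, the critical
   value b(C3) = Vcrit(phi(C3)) has derivative 1 / (2 (C1 - phi(C3))). *)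
Lemma critical_value_derive (phi b : R -> R) (y : R) :
  0 < y < crit ->
  (forall z, 0 < z < crit -> cubicF C1 C2 (phi z) = z /\ b z = Vcrit C1 C2 (phi z)) ->
  continuity_pt phi y -> phi y <> C1 -> phi y <> p0 ->
  is_derive b y (/ (2 * (C1 - phi y))).
Proof.
  intros Hy Hphi Hc HC1 Hp0.
  assert (Hd : is_derive phi y (/ (6 * (phi y - C1) * (phi y - p0)))).
  { apply (inverse_derive (cubicF C1 C2) phi y _ (Rmin y (crit - y)));
      [apply Rmin_pos; lra| |exact Hc|apply cubic_derive|].
    - intros z Hz; apply Hphi; apply Rabs_def2 in Hz.
      pose proof (Rmin_l y (crit - y)); pose proof (Rmin_r y (crit - y)); lra.
    - repeat apply Rmult_integral_contrapositive_currified; lra. }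
  apply (is_derive_ext_loc (fun z => Vcrit C1 C2 (phi z))).
  - apply (filter_imp (fun z => 0 < z < crit)); [|apply locally_open_interval; exact Hy].
    intros z Hz; symmetry; apply Hphi, Hz.
  - replace (/ (2 * (C1 - phi y)))
      with (/ (6 * (phi y - C1) * (phi y - p0)) * (C1 - C2 - 3 * phi y))
      by (field; repeat split; lra).
    apply (is_derive_comp (Vcrit C1 C2) phi y); [apply Vcrit_derive|exact Hd].
Qed.

Lemma critical_value_C1 (phi b : R -> R) :
  (forall z, 0 < z < crit -> cubicF C1 C2 (phi z) = z /\ b z = Vcrit C1 C2 (phi z)) ->
  (forall z, 0 < z < crit -> continuity_pt phi z /\ phi z <> C1 /\ phi z <> p0) ->
  C1_on b 0 crit.
Proof.
  intros Hphi Hreg.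
  apply (C1_on_of_derive b (fun z => / (2 * (C1 - phi z)))).
  - intros z Hz; destruct (Hreg z Hz) as (Hc & H1 & H2).
    apply critical_value_derive; auto.
  - intros z Hz; destruct (Hreg z Hz) as (Hc & H1 & _).
    apply continuity_pt_filterlim.
    apply continuity_pt_inv; [|lra].
    apply continuity_pt_mult; [apply continuity_pt_const; intros ? ?; reflexivity|].
    apply continuity_pt_minus; [apply continuity_pt_const; intros ? ?; reflexivity|exact Hc].
Qed.

(* phi2 > p0 and phi1 < p0 stay away from C1 and p0, so b_-, b_+ are C^1. *)
Lemma bminus_C1 : C1_on (bminus C1 C2) 0 crit.
Proof.
  apply (critical_value_C1 (phi2 C1 C2)); intros z Hz;
    destruct (phi2_spec z Hz) as [Hp E].
  - split; [exact E|apply bminus_eq, Hz].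
  - split; [apply phi2_cont, Hz|lra].
Qed.

Lemma bplus_C1 : C1_on (bplus C1 C2) 0 crit.
Proof.
  apply (critical_value_C1 (phi1 C1 C2)); intros z Hz;
    destruct (phi1_spec z Hz) as [Hp E].
  - split; [exact E|apply bplus_eq, Hz].
  - split; [apply phi1_cont, Hz|lra].
Qed.

Lemma critical_value_lim (F : (R -> Prop) -> Prop) {FF : Filter F} (phi b : R -> R) (l : R) :
  F (fun y => 0 < y < crit) ->
  (forall y, 0 < y < crit -> b y = Vcrit C1 C2 (phi y)) ->
  filterlim phi F (locally l) -> filterlim b F (locally (Vcrit C1 C2 l)).
Proof.
  intros Hrange Hb Hphi.
  apply (filterlim_ext_loc (fun y => Vcrit C1 C2 (phi y))).
  - apply (filter_imp (fun y => 0 < y < crit)); [|exact Hrange].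
    intros y Hy; symmetry; apply Hb, Hy.
  - eapply filterlim_comp; [exact Hphi|apply continuity_pt_filterlim].
    unfold Vcrit; reg.
Qed.

Lemma near_0_right : at_right 0 (fun y => 0 < y < crit).
Proof.
  exists (mkposreal _ crit_pos); intros y Hy Hpos.
  change (Rabs (y - 0) < crit) in Hy; apply Rabs_def2 in Hy; simpl in Hpos; lra.
Qed.

Lemma near_crit_left : at_left crit (fun y => 0 < y < crit).
Proof.
  exists (mkposreal _ crit_pos); intros y Hy Hlt.
  change (Rabs (y - crit) < crit) in Hy; apply Rabs_def2 in Hy; simpl in Hlt; lra.
Qed.

(* The four end-point values are Vcrit at C1, p0 and -C2/2. *)
Lemma bminus_lim0 : filterlim (bminus C1 C2) (at_right 0) (locally (- / 2 * C1 ^ 2 - C1 * C2)).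
Proof.
  replace (- / 2 * C1 ^ 2 - C1 * C2) with (Vcrit C1 C2 C1) by (unfold Vcrit; field).
  apply (critical_value_lim _ (phi2 C1 C2)); [apply near_0_right|apply bminus_eq|apply phi2_lim0].
Qed.

Lemma bminus_lim_crit : filterlim (bminus C1 C2) (at_left crit) (locally (/ 6 * (C1 - C2) ^ 2)).
Proof.
  replace (/ 6 * (C1 - C2) ^ 2) with (Vcrit C1 C2 p0) by (unfold Vcrit; field).
  apply (critical_value_lim _ (phi2 C1 C2));
    [apply near_crit_left|apply bminus_eq|apply phi2_lim_crit].
Qed.

Lemma bplus_lim0 : filterlim (bplus C1 C2) (at_right 0) (locally (/ 8 * (C2 ^ 2 - 4 * C1 * C2))).
Proof.
  replace (/ 8 * (C2 ^ 2 - 4 * C1 * C2)) with (Vcrit C1 C2 (- C2 / 2)) by (unfold Vcrit; field).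
  apply (critical_value_lim _ (phi1 C1 C2)); [apply near_0_right|apply bplus_eq|apply phi1_lim0].
Qed.

Lemma bplus_lim_crit : filterlim (bplus C1 C2) (at_left crit) (locally (/ 6 * (C1 - C2) ^ 2)).
Proof.
  replace (/ 6 * (C1 - C2) ^ 2) with (Vcrit C1 C2 p0) by (unfold Vcrit; field).
  apply (critical_value_lim _ (phi1 C1 C2));
    [apply near_crit_left|apply bplus_eq|apply phi1_lim_crit].
Qed.

End Cubic.

(* The critical point with critical value b on the branch sg = 1 (right of
   the vertex, i.e. phi2) or sg = -1 (left of it, i.e. phi1): the roots of
   Vcrit p = b. *)
Definition crit_point (C1 C2 sg b : R) : R :=
  (C1 - C2) / 3 + sg * sqrt ((C1 - C2) ^ 2 - 6 * b) / 3.

(* The explicit inverses of b_- (sg = 1) and b_+ (sg = -1). *)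
Definition C3_of_b (C1 C2 sg b : R) : R := cubicF C1 C2 (crit_point C1 C2 sg b).

Lemma sqrt_lt_of_sq (x y : R) : 0 <= x -> 0 < y -> x < y * y -> sqrt x < y.
Proof.
  intros Hx Hy Hxy; rewrite <- (sqrt_pow2 y) by lra.
  apply sqrt_lt_1; [lra|nra|simpl; lra].
Qed.

Section Inverses.
Variables C1 C2 : R.
Hypothesis HK : 0 < 2 * C1 + C2.

Local Notation p0 := ((C1 - C2) / 3).
Local Notation crit := (C3crit C1 C2).
Local Notation bcrit := (/ 6 * (C1 - C2) ^ 2).
Local Notation bminus0 := (- / 2 * C1 ^ 2 - C1 * C2).
Local Notation bplus0 := (/ 8 * (C2 ^ 2 - 4 * C1 * C2)).

Lemma Vcrit_crit_point (sg b : R) :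
  sg * sg = 1 -> b < bcrit -> Vcrit C1 C2 (crit_point C1 C2 sg b) = b.
Proof.
  intros Hs Hb; unfold Vcrit, crit_point.
  assert (Hq : sqrt ((C1 - C2) ^ 2 - 6 * b) * sqrt ((C1 - C2) ^ 2 - 6 * b)
               = (C1 - C2) ^ 2 - 6 * b) by (apply sqrt_sqrt; lra).
  set (s := sqrt ((C1 - C2) ^ 2 - 6 * b)) in *.
  transitivity ((C1 - C2) ^ 2 / 6 - (sg * sg) * (s * s) / 6); [field|].
  rewrite Hs, Hq; field.
Qed.

Lemma crit_point_Vcrit (sg p : R) :
  sg * sg = 1 -> 0 <= sg * (p - p0) -> crit_point C1 C2 sg (Vcrit C1 C2 p) = p.
Proof.
  intros Hs Hp; unfold crit_point, Vcrit.
  replace ((C1 - C2) ^ 2 - 6 * (p * (C1 - C2 - 3 / 2 * p))) with ((sg * (3 * p - (C1 - C2))) ^ 2)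
    by (transitivity ((sg * sg) * (3 * p - (C1 - C2)) ^ 2); [ring|rewrite Hs; field]).
  rewrite sqrt_pow2 by nra.
  transitivity (p0 + (sg * sg) * (3 * p - (C1 - C2)) / 3); [field|rewrite Hs; field].
Qed.

Lemma crit_point_minus (b : R) : bminus0 < b < bcrit -> p0 < crit_point C1 C2 1 b < C1.
Proof.
  intros Hb; unfold crit_point.
  assert (0 < sqrt ((C1 - C2) ^ 2 - 6 * b)) by (apply sqrt_lt_R0; lra).
  assert (sqrt ((C1 - C2) ^ 2 - 6 * b) < 2 * C1 + C2) by (apply sqrt_lt_of_sq; nra).
  lra.
Qed.

Lemma crit_point_plus (b : R) : bplus0 < b < bcrit -> - C2 / 2 < crit_point C1 C2 (-1) b < p0.
Proof.
  intros Hb; unfold crit_point.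
  assert (0 < sqrt ((C1 - C2) ^ 2 - 6 * b)) by (apply sqrt_lt_R0; lra).
  assert (sqrt ((C1 - C2) ^ 2 - 6 * b) < (2 * C1 + C2) / 2) by (apply sqrt_lt_of_sq; nra).
  lra.
Qed.

Lemma C3_of_b_derive (sg b : R) : sg * sg = 1 -> b < bcrit ->
  is_derive (C3_of_b C1 C2 sg) b (2 * (C1 - crit_point C1 C2 sg b)).
Proof.
  intros Hs Hb.
  set (s := sqrt ((C1 - C2) ^ 2 - 6 * b)).
  assert (Hs0 : 0 < s) by (apply sqrt_lt_R0; lra).
  assert (Hp : is_derive (crit_point C1 C2 sg) b (- sg / s)).
  { unfold crit_point; auto_derive; [lra|].
    replace ((C1 - C2) * ((C1 - C2) * 1) + - (6 * b))
      with ((C1 - C2) ^ 2 - 6 * b) by ring; fold s; field; lra. }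
  replace (2 * (C1 - crit_point C1 C2 sg b))
    with (- sg / s * (6 * (crit_point C1 C2 sg b - C1) * (crit_point C1 C2 sg b - p0))).
  - apply (is_derive_comp (cubicF C1 C2)); [apply cubic_derive|exact Hp].
  - unfold crit_point; fold s.
    transitivity (2 * (C1 - (p0 + sg * s / 3)) * (sg * sg)); [field; lra|rewrite Hs; ring].
Qed.

Lemma C3_of_b_C1 (sg a : R) : sg * sg = 1 -> C1_on (C3_of_b C1 C2 sg) a bcrit.
Proof.
  intros Hs; apply (C1_on_of_derive _ (fun b => 2 * (C1 - crit_point C1 C2 sg b))).
  - intros b Hb; apply C3_of_b_derive; lra.
  - intros b Hb; apply (@ex_derive_continuous R_AbsRing R_NormedModule).
    unfold crit_point; auto_derive; lra.
Qed.

Lemma C3minus_spec (b : R) : bminus0 < b < bcrit ->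
  0 < C3_of_b C1 C2 1 b < crit /\ bminus C1 C2 (C3_of_b C1 C2 1 b) = b.
Proof.
  intros Hb; pose proof (crit_point_minus b Hb) as Hp.
  pose proof (cubic_range_right C1 C2 _ Hp) as Hc.
  split; [exact Hc|].
  unfold C3_of_b; rewrite bminus_eq, phi2_of_value by auto.
  apply Vcrit_crit_point; lra.
Qed.

Lemma C3plus_spec (b : R) : bplus0 < b < bcrit ->
  0 < C3_of_b C1 C2 (-1) b < crit /\ bplus C1 C2 (C3_of_b C1 C2 (-1) b) = b.
Proof.
  intros Hb; pose proof (crit_point_plus b Hb) as Hp.
  pose proof (cubic_range_left C1 C2 HK _ Hp) as Hc.
  split; [exact Hc|].
  unfold C3_of_b; rewrite bplus_eq, phi1_of_value by auto.
  apply Vcrit_crit_point; lra.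
Qed.

Lemma C3minus_of_bminus (x : R) : 0 < x < crit -> C3_of_b C1 C2 1 (bminus C1 C2 x) = x.
Proof.
  intros Hx; rewrite bminus_eq by auto; destruct (phi2_spec C1 C2 HK x Hx) as [Hp E].
  unfold C3_of_b; rewrite crit_point_Vcrit; [exact E|ring|lra].
Qed.

Lemma C3plus_of_bplus (x : R) : 0 < x < crit -> C3_of_b C1 C2 (-1) (bplus C1 C2 x) = x.
Proof.
  intros Hx; rewrite bplus_eq by auto; destruct (phi1_spec C1 C2 HK x Hx) as [Hp E].
  unfold C3_of_b; rewrite crit_point_Vcrit; [exact E|ring|lra].
Qed.

Lemma bminus_range (x : R) : 0 < x < crit -> bminus0 < bminus C1 C2 x.
Proof.
  intros Hx; rewrite bminus_eq by auto; destruct (phi2_spec C1 C2 HK x Hx) as [Hp _].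
  replace bminus0 with (Vcrit C1 C2 C1) by (unfold Vcrit; field).
  apply Vcrit_decr; lra.
Qed.

Lemma bplus_range (x : R) : 0 < x < crit -> bplus0 < bplus C1 C2 x < bcrit.
Proof.
  intros Hx; rewrite bplus_eq by auto; destruct (phi1_spec C1 C2 HK x Hx) as [Hp _].
  replace bplus0 with (Vcrit C1 C2 (- C2 / 2)) by (unfold Vcrit; field).
  replace bcrit with (Vcrit C1 C2 p0) by (unfold Vcrit; field).
  split; apply Vcrit_incr; lra.
Qed.

Lemma region_iff (C3 b : R) :
  (0 < C3 < crit /\ bminus C1 C2 C3 < b < bplus C1 C2 C3) <->
  (bminus0 < b < bcrit /\ C3 < C3_of_b C1 C2 1 b /\
   (b <= bplus0 -> 0 < C3) /\ (bplus0 < b -> C3_of_b C1 C2 (-1) b < C3)).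
Proof.
  pose proof (bminus_incr C1 C2 HK) as Im; pose proof (bplus_incr C1 C2 HK) as Ip.
  split.
  - intros [HC Hb].
    pose proof (bminus_range C3 HC); pose proof (bplus_range C3 HC).
    assert (Hbr : bminus0 < b < bcrit) by lra.
    destruct (C3minus_spec b Hbr) as [Hm Em].
    split; [exact Hbr|split; [|split; [intros; lra|]]].
    + apply (strictly_increasing_lt_iff (bminus C1 C2) 0 crit); auto; rewrite Em; lra.
    + intros Hb0; destruct (C3plus_spec b ltac:(lra)) as [Hp Ep].
      apply (strictly_increasing_lt_iff (bplus C1 C2) 0 crit); auto; rewrite Ep; lra.
  - intros (Hbr & Hm & Hlow & Hp).
    destruct (C3minus_spec b Hbr) as [Hm' Em].
    assert (HC : 0 < C3 < crit).
    { split; [|lra].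
      destruct (Rle_or_lt b bplus0) as [E|E]; [auto|].
      destruct (C3plus_spec b ltac:(lra)); specialize (Hp E); lra. }
    split; [exact HC|split].
    + rewrite <- Em; apply Im; lra.
    + destruct (Rle_or_lt b bplus0) as [E|E].
      * pose proof (bplus_range C3 HC); lra.
      * destruct (C3plus_spec b ltac:(lra)) as [Hp' Ep]; specialize (Hp E).
        rewrite <- Ep; apply Ip; lra.
Qed.

End Inverses.

Lemma monic_cubic_vieta (s e p xa xb : R) :
  xa <> xb ->
  xa ^ 3 - s * xa ^ 2 + e * xa - p = 0 -> xb ^ 3 - s * xb ^ 2 + e * xb - p = 0 ->
  e = xa * xb + xa * (s - xa - xb) + xb * (s - xa - xb) /\ p = xa * xb * (s - xa - xb).
Proof.
  intros Hab Ha Hb.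
  assert (He : e = s * (xa + xb) - (xa ^ 2 + xa * xb + xb ^ 2)).
  { assert (Hdiff : (xa - xb) * (xa ^ 2 + xa * xb + xb ^ 2 - s * (xa + xb) + e)
                    = (xa ^ 3 - s * xa ^ 2 + e * xa - p) - (xb ^ 3 - s * xb ^ 2 + e * xb - p))
      by ring.
    rewrite Ha, Hb, Rminus_0_r in Hdiff.
    apply Rmult_integral in Hdiff as [H|H]; lra. }
  split; [rewrite He; ring|].
  replace p with (xa ^ 3 - s * xa ^ 2 + e * xa) by lra; rewrite He; ring.
Qed.

(* E2 reads  alpha^2 (C1 - phi) phi'^2 = energy_cubic phi. *)
Definition energy_cubic (C1 C2 C3 b x : R) : R :=
  - (x ^ 3 - (C1 - C2) * x ^ 2 + 2 * b * x - (2 * b * C1 + C1 ^ 2 * C2 - C3)).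

Lemma energy_cubic_U (C1 C2 C3 b x : R) :
  x <> C1 -> energy_cubic C1 C2 C3 b x = 2 * (C1 - x) * (b - U C1 C2 C3 x).
Proof. intros Hx; unfold energy_cubic, U; field; lra. Qed.

(* In the region, the energy cubic is negative at phi1 and C1 and positive at
   phi2, so it has roots xa in (phi1, phi2), xb in (phi2, C1), and a third
   root xc < phi1.  The periodic orbit oscillates between xa and xb. *)
Lemma energy_cubic_roots (C1 C2 C3 b : R) :
  0 < 2 * C1 + C2 -> 0 < C3 < C3crit C1 C2 ->
  bminus C1 C2 C3 < b < bplus C1 C2 C3 ->
  exists xa xb xc, xc < xa < xb /\ xb < C1 /\ C2 = C1 - xa - xb - xc /\
    b = (xa * xb + xa * xc + xb * xc) / 2 /\ C3 = 2 * b * C1 + C1 ^ 2 * C2 - xa * xb * xc.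
Proof.
  intros HK HC Hb.
  destruct (phi1_spec C1 C2 HK C3 HC) as [H1 _]; destruct (phi2_spec C1 C2 HK C3 HC) as [H2 _].
  unfold bminus, bplus in Hb.
  set (p1 := phi1 C1 C2 C3) in *; set (p2 := phi2 C1 C2 C3) in *.
  set (Q := energy_cubic C1 C2 C3 b).
  assert (Q1 : Q p1 < 0).
  { unfold Q; rewrite energy_cubic_U by lra.
    assert (0 < 2 * (C1 - p1) * (U C1 C2 C3 p1 - b)) by (apply Rmult_lt_0_compat; lra); lra. }
  assert (Q2 : 0 < Q p2)
    by (unfold Q; rewrite energy_cubic_U by lra; apply Rmult_lt_0_compat; lra).
  assert (QC1 : Q C1 < 0) by (unfold Q, energy_cubic; ring_simplify; lra).
  assert (Hc : continuity Q) by (unfold Q, energy_cubic; reg).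
  destruct (root_between Q p1 p2 Hc ltac:(lra) ltac:(nra)) as [xa [Ha Qa]].
  destruct (root_between Q p2 C1 Hc ltac:(lra) ltac:(nra)) as [xb [Hb' Qb]].
  set (xc := C1 - C2 - xa - xb).
  destruct (monic_cubic_vieta (C1 - C2) (2 * b) (2 * b * C1 + C1 ^ 2 * C2 - C3) xa xb)
    as [He Hp]; [lra|unfold Q, energy_cubic in Qa; lra|unfold Q, energy_cubic in Qb; lra|].
  fold xc in He, Hp.
  assert (Hfac : forall x, Q x = (x - xa) * (xb - x) * (x - xc)).
  { intros x; unfold Q, energy_cubic; rewrite Hp, He.
    replace (C1 - C2) with (xa + xb + xc) by (unfold xc; ring); ring. }
  assert (Hxc : xc < p1).
  { pose proof Q1 as Q1'; rewrite Hfac in Q1'.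
    assert (0 < (xa - p1) * (xb - p1)) by (apply Rmult_lt_0_compat; lra).
    destruct (Rlt_or_le xc p1) as [E|E]; [exact E|].
    assert (0 <= (xa - p1) * (xb - p1) * (xc - p1)) by (apply Rmult_le_pos; lra).
    nra. }
  exists xa, xb, xc; repeat split; try lra; unfold xc; ring.
Qed.

(* Pointwise identities behind (E2) and (E1) for phi = m + r cos(theta),
   phi' = -r sin(theta) W, W^2 = (phi - xc) / (alpha^2 (C1 - phi)). *)
Lemma oscillator_energy (al C1 xa xb xc c s W : R) :
  0 < al -> s ^ 2 + c ^ 2 = 1 -> (xa + xb) / 2 + (xb - xa) / 2 * c <> C1 ->
  W * W = ((xa + xb) / 2 + (xb - xa) / 2 * c - xc)
          / (al ^ 2 * (C1 - ((xa + xb) / 2 + (xb - xa) / 2 * c))) ->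
  al ^ 2 * (C1 - ((xa + xb) / 2 + (xb - xa) / 2 * c)) * (- ((xb - xa) / 2) * s * W) ^ 2
  = ((xa + xb) / 2 + (xb - xa) / 2 * c - xa) * (xb - ((xa + xb) / 2 + (xb - xa) / 2 * c))
    * ((xa + xb) / 2 + (xb - xa) / 2 * c - xc).
Proof.
  intros Hal Hsc Hne HW.
  replace ((- ((xb - xa) / 2) * s * W) ^ 2) with (((xb - xa) / 2) ^ 2 * s ^ 2 * (W * W)) by ring.
  rewrite HW; replace (s ^ 2) with (1 - c ^ 2) by lra; field; split; lra.
Qed.

Lemma E2_of_energy (al C1 C2 C3 b xa xb xc ph D : R) :
  C2 = C1 - xa - xb - xc -> b = (xa * xb + xa * xc + xb * xc) / 2 ->
  C3 = 2 * b * C1 + C1 ^ 2 * C2 - xa * xb * xc ->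
  al ^ 2 * (C1 - ph) * D ^ 2 = (ph - xa) * (xb - ph) * (ph - xc) ->
  al ^ 2 * (ph - C1) * D ^ 2 + (C1 - C2) * ph ^ 2 - ph ^ 3 - 2 * b * ph
    + C1 * (2 * b + C1 * C2) = C3.
Proof.
  intros HC2 Hb HC3 HD; subst C3 b C2.
  replace (al ^ 2 * (ph - C1) * D ^ 2) with (- (al ^ 2 * (C1 - ph) * D ^ 2)) by ring.
  rewrite HD; field.
Qed.

(* (E1) with phi'' = -r cos(theta) W^2 - r sin(theta) (W^2)'(theta) / 2. *)
Lemma oscillator_E1 (al C1 C2 b xa xb xc c s W : R) :
  0 < al -> s ^ 2 + c ^ 2 = 1 -> (xa + xb) / 2 + (xb - xa) / 2 * c <> C1 ->
  W * W = ((xa + xb) / 2 + (xb - xa) / 2 * c - xc)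
          / (al ^ 2 * (C1 - ((xa + xb) / 2 + (xb - xa) / 2 * c))) ->
  C2 = C1 - xa - xb - xc -> b = (xa * xb + xa * xc + xb * xc) / 2 ->
  let r := (xb - xa) / 2 in
  let ph := (xa + xb) / 2 + r * c in
  al ^ 2 * (ph - C1)
    * (- r * c * (W * W) - r * s * ((- r * s) * (C1 - xc) / (al ^ 2 * (C1 - ph) ^ 2)) / 2)
  + / 2 * al ^ 2 * (- r * s * W) ^ 2 + (C1 - C2 - 3 / 2 * ph) * ph = b.
Proof.
  intros Hal Hsc Hne HW HC2 Hb r ph; subst C2 b.
  assert (Hph : C1 - ph <> 0) by (unfold ph, r; lra).
  replace (- r * c * (W * W) - r * s * ((- r * s) * (C1 - xc) / (al ^ 2 * (C1 - ph) ^ 2)) / 2)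
    with (- r * c * (W * W) + r ^ 2 * s ^ 2 * (C1 - xc) / (al ^ 2 * (C1 - ph) ^ 2) / 2)
    by (field; split; lra).
  replace ((- r * s * W) ^ 2) with (r ^ 2 * s ^ 2 * (W * W)) by ring.
  rewrite HW; replace (s ^ 2) with (1 - c ^ 2) by lra.
  unfold ph, r in *; field; split; lra.
Qed.

Section Oscillator.
Variables xa xb xc C1 al : R.
Hypothesis Hca : xc < xa.
Hypothesis Hab : xa < xb.
Hypothesis HbC : xb < C1.
Hypothesis Hal : 0 < al.

(* The orbit is phi = amp(theta): it sweeps [xa, xb] as theta runs over a
   period, and theta solves theta' = speed(theta), chosen so that
   phi'^2 = (phi - xa)(xb - phi)(phi - xc) / (alpha^2 (C1 - phi)). *)
Definition amp (t : R) : R := (xa + xb) / 2 + (xb - xa) / 2 * cos t.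
Definition speed2 (t : R) : R := (amp t - xc) / (al ^ 2 * (C1 - amp t)).
Definition speed (t : R) : R := sqrt (speed2 t).
Definition max_speed : R := sqrt ((xb - xc) / (al ^ 2 * (C1 - xb))).
Definition phase : R -> R := flow speed.
Definition oscillation (x : R) : R := amp (phase x).

Lemma amp_bounds (t : R) : xa <= amp t <= xb.
Proof. unfold amp; pose proof (COS_bound t); nra. Qed.

Lemma amp_derive (t : R) : is_derive amp t (- ((xb - xa) / 2) * sin t).
Proof. unfold amp; auto_derive; auto; ring. Qed.

Lemma amp_periodic (t : R) : amp (t + 2 * PI) = amp t.
Proof. unfold amp; rewrite cos_plus, cos_2PI, sin_2PI; ring. Qed.

Lemma amp_smooth (n : nat) : Cn n amp.
Proof. apply Cn_plus; [apply Cn_const|apply Cn_mult; [apply Cn_const|apply Cn_cos]]. Qed.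

Lemma al2_pos : 0 < al ^ 2.
Proof. apply pow_lt, Hal. Qed.

Lemma speed2_bounds (t : R) : 0 < speed2 t <= (xb - xc) / (al ^ 2 * (C1 - xb)).
Proof.
  pose proof (amp_bounds t); pose proof al2_pos; unfold speed2.
  split; [apply Rdiv_lt_0_compat; [lra|apply Rmult_lt_0_compat; lra]|].
  unfold Rdiv; apply Rmult_le_compat; try lra.
  - apply Rlt_le, Rinv_0_lt_compat, Rmult_lt_0_compat; lra.
  - apply Rinv_le_contravar; [apply Rmult_lt_0_compat; lra|apply Rmult_le_compat_l; lra].
Qed.

Lemma speed_pos (t : R) : 0 < speed t.
Proof. apply sqrt_lt_R0, speed2_bounds. Qed.

Lemma speed_le (t : R) : speed t <= max_speed.
Proof. apply sqrt_le_1_alt, speed2_bounds. Qed.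

Lemma speed_sq (t : R) : speed t * speed t = speed2 t.
Proof. apply sqrt_sqrt, Rlt_le, speed2_bounds. Qed.

Lemma speed_smooth (n : nat) : Cn n speed.
Proof.
  apply Cn_sqrt; [|apply speed2_bounds].
  apply Cn_mult; [apply Cn_plus; [apply amp_smooth|apply Cn_const]|].
  apply Cn_inv; [apply Cn_mult; [apply Cn_const|apply Cn_plus; [apply Cn_const|apply Cn_opp, amp_smooth]]|].
  intros t; pose proof (amp_bounds t); pose proof al2_pos.
  apply Rmult_integral_contrapositive; split; lra.
Qed.

Lemma speed_cont (t : R) : continuous speed t.
Proof.
  apply (@ex_derive_continuous R_AbsRing R_NormedModule).
  exact (speed_smooth 1%nat 1%nat t ltac:(lia)).
Qed.

Lemma speed_periodic (t : R) : speed (t + 2 * PI) = speed t.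
Proof. unfold speed, speed2; rewrite amp_periodic; reflexivity. Qed.

Definition dspeed2 (t : R) : R :=
  (- ((xb - xa) / 2) * sin t) * (C1 - xc) / (al ^ 2 * (C1 - amp t) ^ 2).

Lemma speed_derive (t : R) : is_derive speed t (dspeed2 t / (2 * speed t)).
Proof.
  pose proof (amp_bounds t); pose proof al2_pos.
  apply (is_derive_sqrt speed2); [|apply speed2_bounds].
  unfold speed2, dspeed2, amp in *; auto_derive.
  - apply Rmult_integral_contrapositive; split; lra.
  - field; split; lra.
Qed.

Lemma phase_derive (x : R) : is_derive phase x (speed (phase x)).
Proof. apply (flow_derive speed max_speed speed_cont speed_pos speed_le). Qed.

Definition velocity (t : R) : R := - ((xb - xa) / 2) * sin t * speed t.

Definition acceleration (t : R) : R :=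
  (- ((xb - xa) / 2) * cos t * speed t
   + - ((xb - xa) / 2) * sin t * (dspeed2 t / (2 * speed t))) * speed t.

Lemma oscillation_derive (x : R) : is_derive oscillation x (velocity (phase x)).
Proof.
  replace (velocity (phase x))
    with (speed (phase x) * (- ((xb - xa) / 2) * sin (phase x))) by (unfold velocity; ring).
  apply (is_derive_comp amp phase); [apply amp_derive|apply phase_derive].
Qed.

Lemma Derive_oscillation : Derive oscillation = fun x => velocity (phase x).
Proof. apply functional_extensionality; intros x; apply is_derive_unique, oscillation_derive. Qed.

Lemma velocity_derive (t : R) :
  is_derive velocity t
    (- ((xb - xa) / 2) * cos t * speed t
     + - ((xb - xa) / 2) * sin t * (dspeed2 t / (2 * speed t))).
Proof.
  apply (is_derive_mult (fun t => - ((xb - xa) / 2) * sin t) speed);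
    [auto_derive; auto; ring|apply speed_derive|intros; apply Rmult_comm].
Qed.

Lemma oscillation_second (x : R) : Derive_n oscillation 2 x = acceleration (phase x).
Proof.
  change (Derive_n oscillation 2 x) with (Derive (Derive oscillation) x).
  rewrite Derive_oscillation; apply is_derive_unique.
  unfold acceleration; rewrite Rmult_comm.
  apply (is_derive_comp velocity phase); [apply velocity_derive|apply phase_derive].
Qed.

Lemma phase_shift (x : R) : phase (x + travel_time speed (2 * PI)) = phase x + 2 * PI.
Proof. apply (flow_shift speed max_speed speed_cont speed_pos speed_le), speed_periodic. Qed.

Lemma phase_at_travel_time (t : R) : phase (travel_time speed t) = t.
Proof. apply (flow_travel speed max_speed speed_cont speed_pos speed_le). Qed.

Lemma oscillation_periodic (x : R) :
  oscillation (x + travel_time speed (2 * PI)) = oscillation x.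
Proof. unfold oscillation; rewrite phase_shift; apply amp_periodic. Qed.

Lemma period_pos : 0 < travel_time speed (2 * PI).
Proof.
  rewrite <- (travel_time_0 speed).
  apply (travel_time_incr speed max_speed speed_cont speed_pos speed_le).
  pose proof PI_RGT_0; lra.
Qed.

Lemma oscillation_nonconstant : oscillation 0 <> oscillation (travel_time speed PI).
Proof.
  unfold oscillation; rewrite <- (travel_time_0 speed) at 1; rewrite !phase_at_travel_time.
  unfold amp; rewrite cos_0, cos_PI; lra.
Qed.

Lemma oscillation_smooth : smooth oscillation.
Proof.
  intros n x.
  apply (Cn_along_flow phase speed phase_derive speed_smooth n amp amp_smooth); lia.
Qed.

(* With C2, b, C3 given by the roots, phi solves (E1) and (E2); Defs.E1 is
   qualified because Stdlib's Reals also exports a constant named E1. *)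
Section Equations.
Variables C2 C3 b : R.
Hypothesis HC2 : C2 = C1 - xa - xb - xc.
Hypothesis Hb : b = (xa * xb + xa * xc + xb * xc) / 2.
Hypothesis HC3 : C3 = 2 * b * C1 + C1 ^ 2 * C2 - xa * xb * xc.

Lemma phase_facts (x : R) :
  let t := phase x in
  sin t ^ 2 + cos t ^ 2 = 1 /\ amp t <> C1 /\
  speed t * speed t = (amp t - xc) / (al ^ 2 * (C1 - amp t)).
Proof.
  intros t; pose proof (amp_bounds t).
  split; [pose proof (sin2_cos2 t) as Hsc; unfold Rsqr in Hsc; simpl; lra|].
  split; [lra|apply speed_sq].
Qed.

Lemma oscillation_E2 : Defs.E2 al C1 C2 C3 b oscillation.
Proof.
  intros x; rewrite Derive_oscillation.
  destruct (phase_facts x) as (Hsc & Hne & HW).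
  apply (E2_of_energy al C1 C2 C3 b xa xb xc); auto.
  apply oscillator_energy; auto.
Qed.

Lemma oscillation_E1 : Defs.E1 al C1 C2 b oscillation.
Proof.
  intros x; rewrite oscillation_second, Derive_oscillation.
  destruct (phase_facts x) as (Hsc & Hne & HW).
  pose proof (speed_pos (phase x)).
  pose proof (oscillator_E1 al C1 C2 b xa xb xc (cos (phase x)) (sin (phase x))
    (speed (phase x)) Hal Hsc Hne HW HC2 Hb) as E; cbv zeta in E.
  rewrite <- E; unfold oscillation, acceleration, velocity, dspeed2, amp in *.
  field; split; lra.
Qed.

Lemma oscillation_solution : smooth_periodic_solution al C1 C2 C3 b oscillation.
Proof.
  split; [exact oscillation_smooth|].
  split; [exists (travel_time speed (2 * PI)); split; [exact period_pos|exact oscillation_periodic]|].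
  split; [exists 0, (travel_time speed PI); exact oscillation_nonconstant|].
  split; [exact oscillation_E1|exact oscillation_E2].
Qed.

End Equations.

End Oscillator.

Lemma periodic_solution_exists (alpha C1 C2 C3 b : R) :
  0 < alpha -> 0 < 2 * C1 + C2 -> 0 < C3 < C3crit C1 C2 ->
  bminus C1 C2 C3 < b < bplus C1 C2 C3 ->
  exists phi, smooth_periodic_solution alpha C1 C2 C3 b phi.
Proof.
  intros Hal HK HC Hb.
  destruct (energy_cubic_roots C1 C2 C3 b HK HC Hb)
    as (xa & xb & xc & Hord & HbC & HC2 & Hbv & HC3).
  exists (oscillation xa xb xc C1 alpha); apply oscillation_solution; auto; lra.
Qed.

Theorem theorem1 :
  forall alpha C1 C2 : R,
    0 < alpha -> 0 < 2 * C1 + C2 ->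
    (* regularity and monotonicity of b_- and b_+ *)
    C1_on (bminus C1 C2) 0 (C3crit C1 C2) /\
    C1_on (bplus C1 C2) 0 (C3crit C1 C2) /\
    strictly_increasing_on (bminus C1 C2) 0 (C3crit C1 C2) /\
    strictly_increasing_on (bplus C1 C2) 0 (C3crit C1 C2) /\
    (* end-point limits *)
    filterlim (bminus C1 C2) (at_right 0)
      (locally (- / 2 * C1 ^ 2 - C1 * C2)) /\
    filterlim (bminus C1 C2) (at_left (C3crit C1 C2))
      (locally (/ 6 * (C1 - C2) ^ 2)) /\
    filterlim (bplus C1 C2) (at_right 0)
      (locally (/ 8 * (C2 ^ 2 - 4 * C1 * C2))) /\
    filterlim (bplus C1 C2) (at_left (C3crit C1 C2))
      (locally (/ 6 * (C1 - C2) ^ 2)) /\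
    (* C^1 inverses C3^- and C3^+, and the region enclosed by the boundaries
       C3 = 0, C3 = C3^+(b), C3 = C3^-(b) *)
    (exists C3m C3p : R -> R,
       C1_inverse (bminus C1 C2) C3m 0 (C3crit C1 C2)
         (- / 2 * C1 ^ 2 - C1 * C2) (/ 6 * (C1 - C2) ^ 2) /\
       C1_inverse (bplus C1 C2) C3p 0 (C3crit C1 C2)
         (/ 8 * (C2 ^ 2 - 4 * C1 * C2)) (/ 6 * (C1 - C2) ^ 2) /\
       (forall C3 b : R,
          (0 < C3 < C3crit C1 C2 /\ bminus C1 C2 C3 < b < bplus C1 C2 C3) <->
          (- / 2 * C1 ^ 2 - C1 * C2 < b < / 6 * (C1 - C2) ^ 2 /\
           C3 < C3m b /\
           (b <= / 8 * (C2 ^ 2 - 4 * C1 * C2) -> 0 < C3) /\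
           (/ 8 * (C2 ^ 2 - 4 * C1 * C2) < b -> C3p b < C3)))) /\
    (* existence of smooth periodic solutions in the region *)
    (forall C3 b : R,
       0 < C3 < C3crit C1 C2 ->
       bminus C1 C2 C3 < b < bplus C1 C2 C3 ->
       exists phi : R -> R, smooth_periodic_solution alpha C1 C2 C3 b phi).
Proof.
  intros alpha C1 C2 Hal HK.
  split; [exact (bminus_C1 C1 C2 HK)|]; split; [exact (bplus_C1 C1 C2 HK)|].
  split; [exact (bminus_incr C1 C2 HK)|]; split; [exact (bplus_incr C1 C2 HK)|].
  split; [exact (bminus_lim0 C1 C2 HK)|]; split; [exact (bminus_lim_crit C1 C2 HK)|].
  split; [exact (bplus_lim0 C1 C2 HK)|]; split; [exact (bplus_lim_crit C1 C2 HK)|].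
  split.
  - exists (C3_of_b C1 C2 1), (C3_of_b C1 C2 (-1)); split; [|split].
    + split; [intros; apply C3minus_spec; auto|].
      split; [intros; apply C3minus_of_bminus; auto|apply C3_of_b_C1; ring].
    + split; [intros; apply C3plus_spec; auto|].
      split; [intros; apply C3plus_of_bplus; auto|apply C3_of_b_C1; ring].
    + intros C3 b; apply region_iff; auto.
  - intros C3 b HC Hb; apply periodic_solution_exists; auto.
Qed.
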